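(* Let $\alpha=\alpha^m:[m]\to\mathbb N$ be a positional satisfaction function with $\alpha(1)\ge\alpha(2)\ge\dots\ge\alpha(m)$. Then for every instance of $\alpha$-SU-Monroe (with $K\le m$), Algorithm GM outputs a Monroe $K$-assignment $\Phi$ with $\ell_1^\alpha(\Phi)\ge(1-\frac1e)\cdot\mathrm{OPT}$, where $\mathrm{OPT}$ is the maximum of $\ell_1^\alpha$ over all Monroe $K$-assignments.
   Context: Agents $N=[n]$, alternatives $A=\{a_1,\dots,a_m\}$; each agent $i$ has a strict linear order on $A$, $\mathrm{pos}_i(a)$ the position of $a$ ($1$ = best). $\ell_1^\alpha(\Phi)=\sum_{i}\alpha(\mathrm{pos}_i(\Phi(i)))$, where an agent left unassigned (assigned the null alternative $\bot$) is treated as having $\mathrm{pos}_i(\bot)=m$. A Monroe $K$-assignment is $\Phi:N\to A$ with $|\Phi(N)|\le K$ and $|\Phi^{-1}(a)|\le\lceil n/K\rceil$ for all $a$. For $S\subseteq A$ with $|S|\le K$, $\Phi^S_\alpha$ is a partial assignment (each agent mapped to an element of $S$ or to $\bot$) with each $a\in S$ receiving at most $\lceil n/K\rceil$ agents, maximizing $\ell_1^\alpha$ among such partial assignments. Algorithm GM: set $S=\emptyset$; for $K$ iterations, choose $a\in A\setminus S$ maximizing $\ell_1^\alpha(\Phi^{S\cup\{a\}}_\alpha)$ and add it to $S$; output $\Phi^S_\alpha$. *)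

From Stdlib Require Import Reals.
From mathcomp Require Import all_boot all_fingroup.

Set Implicit Arguments.
Unset Strict Implicit.
Unset Printing Implicit Defensive.

(* A preference profile assigns to every agent i a strict linear order on the
   alternatives, encoded as a permutation  pref i : {perm 'I_m}  with
   pref i a = (position of a in i's ranking) - 1 (0-based rank).
   pos_i(a) is the 1-based position; the null alternative bot gets position m. *)

Definition profile (n m : nat) := 'I_n -> {perm 'I_m}.

Definition pos (n m : nat) (P : profile n m) (i : 'I_n) (a : 'I_m) : nat :=
  (P i a).+1.

Definition opos (n m : nat) (P : profile n m) (i : 'I_n) (x : option 'I_m) : nat :=
  match x with Some a => pos P i a | None => m end.

Definition nonincreasing_on (m : nat) (alpha : nat -> nat) : Prop :=
  forall p q : nat, 1 <= p -> p <= q -> q <= m -> alpha q <= alpha p.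

Definition ell (n m : nat) (alpha : nat -> nat) (P : profile n m)
    (Phi : {ffun 'I_n -> option 'I_m}) : nat :=
  \sum_(i < n) alpha (opos P i (Phi i)).

Definition ell_tot (n m : nat) (alpha : nat -> nat) (P : profile n m)
    (Phi : {ffun 'I_n -> 'I_m}) : nat :=
  \sum_(i < n) alpha (pos P i (Phi i)).

(* ceil(n / K) for K >= 1 *)
Definition cap (n K : nat) : nat := (n + K.-1) %/ K.

Definition monroe (n m K : nat) (Phi : {ffun 'I_n -> 'I_m}) : bool :=
  (#|[set Phi i | i in 'I_n]| <= K) &&
  [forall a : 'I_m, #|[set i | Phi i == a]| <= cap n K].

Definition partial_for (n m K : nat) (S : {set 'I_m})
    (Phi : {ffun 'I_n -> option 'I_m}) : bool :=
  [forall i : 'I_n, if Phi i is Some a then a \in S else true] &&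
  [forall a : 'I_m, #|[set i | Phi i == Some a]| <= cap n K].

Definition best (n m K : nat) (alpha : nat -> nat) (P : profile n m)
    (S : {set 'I_m}) : nat :=
  \max_(Phi : {ffun 'I_n -> option 'I_m} | partial_for K S Phi) ell alpha P Phi.

Definition OPT (n m K : nat) (alpha : nat -> nat) (P : profile n m) : nat :=
  \max_(Phi : {ffun 'I_n -> 'I_m} | monroe K Phi) ell_tot alpha P Phi.

(* A run of Algorithm GM: s k is the alternative added in iteration k
   (k = 0..K-1); prefix_set s k = S before iteration k. *)
Definition prefix_set (m K : nat) (s : 'I_K -> 'I_m) (k : nat) : {set 'I_m} :=
  [set s j | j in [pred j : 'I_K | j < k]].

Definition GM_run (n m K : nat) (alpha : nat -> nat) (P : profile n m)
    (s : 'I_K -> 'I_m) : Prop :=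
  forall k : 'I_K,
    s k \notin prefix_set s k /\
    (forall a : 'I_m, a \notin prefix_set s k ->
       best K alpha P (a |: prefix_set s k) <= best K alpha P (s k |: prefix_set s k)).

Definition one_minus_inv_e : R := Rminus 1 (Rinv (exp 1)).

From Stdlib Require Import Reals Lra.
From mathcomp Require Import all_boot all_fingroup.
From mathcomp Require Import zify.

Set Implicit Arguments.
Unset Strict Implicit.
Unset Printing Implicit Defensive.

(* The proof is
   the classical analysis of greedy maximization of a monotone submodular set
   function:
   - an exchange argument (sections Reassignment and Exchange) recombines an
     optimal assignment for X + a + b and one for X into feasible assignments
     for X + a and X + b of the same total value, which gives the local
     submodularity of best (best_local_submod);
   - for any monotone, locally submodular f, diminishing returns and the bound
     f(A u T) - f(A) <= sum_(t in T) (f(A + t) - f(A)) follow (Submodularity);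
   - since OPT <= best(T) for some |T| <= K, each greedy step closes a 1/K
     fraction of the gap OPT - best(S) (greedy_step), whence the factor
     1 - (1 - 1/K)^K >= 1 - 1/e (Approximation);
   - finally, because alpha is nonincreasing and bot counts as position m,
     the optimal partial assignment for the K chosen alternatives can be
     completed, at no loss, into a Monroe K-assignment (Completion). *)

Section Reassignment.
Variables (I A : finType).
Implicit Types (F G : {ffun I -> option A}) (Sw : {set I}).

Definition mix F G Sw : {ffun I -> option A} :=
  [ffun i => if i \in Sw then G i else F i].

Lemma mix0 (F G : {ffun I -> option A}) : mix F G set0 = F.
Proof. by apply/ffunP => i; rewrite ffunE in_set0. Qed.

Lemma mix_add F G Sw (j : I) i : i != j -> mix F G (j |: Sw) i = mix F G Sw i.
Proof. by move=> ij; rewrite !ffunE in_setU1 (negbTE ij). Qed.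

(* Both loads and satisfaction are sums of per-agent weights w i (F i).
   Reassigning a single agent j changes such a sum only through j ... *)
Lemma sum_update (w : I -> option A -> nat) F G (j : I) :
  (forall i, i != j -> G i = F i) ->
  \sum_i w i (G i) + w j (F j) = \sum_i w i (F i) + w j (G j).
Proof.
move=> FG; rewrite (bigD1 j) //= [in RHS](bigD1 j) //=.
rewrite (eq_bigr (fun i => w i (F i))); last by move=> i /FG ->.
by rewrite [LHS]addnAC [RHS]addnAC (addnC (w j (G j))).
Qed.

Lemma sum_mix (w : I -> option A -> nat) F G Sw :
  \sum_i w i (mix F G Sw i) + \sum_i w i (mix G F Sw i) = \sum_i w i (F i) + \sum_i w i (G i).
Proof.
rewrite -!big_split /=; apply: eq_bigr => i _.
by rewrite !ffunE; case: (i \in Sw) => //; rewrite addnC.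
Qed.

Lemma card_set_sum (p : pred I) : #|[set i | p i]| = \sum_i (p i : nat).
Proof.
rewrite -sum1_card big_mkcond /=; apply: eq_bigr => i _; rewrite inE.
by case: (p i).
Qed.

Definition load F (c : A) : nat := #|[set i | F i == Some c]|.

Lemma loadE F c : load F c = \sum_i (F i == Some c : nat).
Proof. exact: card_set_sum. Qed.

Lemma load_update F G (j : I) (c : A) :
  (forall i, i != j -> G i = F i) ->
  load G c + (F j == Some c) = load F c + (G j == Some c).
Proof. by rewrite !loadE; apply: (sum_update (fun _ x => x == Some c : nat)). Qed.

Lemma load_mix_sum F G Sw (c : A) :
  load (mix F G Sw) c + load (mix G F Sw) c = load F c + load G c.
Proof. by rewrite !loadE; apply: (sum_mix (fun _ x => x == Some c : nat)). Qed.

Lemma load_mono F G (c : A) :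
  (forall i, F i = Some c -> G i = Some c) -> load F c <= load G c.
Proof.
move=> FG; apply: subset_leq_card; apply/subsetP => i.
by rewrite !inE => /eqP /FG ->.
Qed.

Lemma load_mix_avoid F G Sw (c : A) :
  (forall i, G i != Some c) ->
  load (mix F G Sw) c <= load F c /\ load (mix G F Sw) c <= load F c.
Proof.
move=> Gc; split; apply: load_mono => i; rewrite ffunE;
  case: (i \in Sw) => // Gi; by move: (Gc i); rewrite Gi eqxx.
Qed.

Lemma sum_load (S : {set A}) F :
  (forall i c, F i = Some c -> c \in S) ->
  \sum_(c in S) load F c = #|[set i | F i != None]|.
Proof.
move=> FS; under eq_bigr do rewrite loadE.
rewrite exchange_big card_set_sum; apply: eq_bigr => i _.
case Fi: (F i) => [d|] /=; last by rewrite big1.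
rewrite (bigD1 d) ?(FS _ _ Fi) //= eqxx big1 // => c /andP [_ cd].
by case: eqP => // -[] dc; rewrite dc eqxx in cd.
Qed.

End Reassignment.

Lemma card_grow (T : finType) (Sw : {set T}) (j : T) :
  j \notin Sw -> #|~: (j |: Sw)| < #|~: Sw|.
Proof.
move=> jSw; apply: proper_card; apply/properP; split.
  by apply/subsetP => i; rewrite !inE negb_or => /andP [].
by exists j; rewrite !inE ?eqxx.
Qed.

(* Given M (the load of each alternative at most C)
   and M0 (likewise, and using neither a nor b), we look for a set Sw of
   agents such that swapping Sw between M and M0 yields two assignments that
   respect the capacity, "M outside Sw, M0 on Sw" avoiding b and "M0 outside
   Sw, M on Sw" avoiding a.  Sw is grown one agent at a time along an
   alternating path starting from the M-agents of b. *)
Section Exchange.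
Variables (I A : finType) (C : nat) (M M0 : {ffun I -> option A}) (a b : A).
Hypotheses (ab : a != b) (M0a : forall i, M0 i != Some a) (M0b : forall i, M0 i != Some b).
Hypotheses (loadM : forall c, load M c <= C) (loadM0 : forall c, load M0 c <= C).

Definition exchange_inv (Sw : {set I}) (h : option A) :=
  [/\ forall i, i \in Sw -> M i != Some a,
      forall c, load (mix M0 M Sw) c <= C &
      forall c, load (mix M M0 Sw) c <= C + (Some c == h)].

Lemma exchange_inv0 : exchange_inv set0 None.
Proof. by split => [i|c|c]; rewrite ?in_set0 // mix0 ?loadM0 // addn0 loadM. Qed.

Lemma exchange_extend Sw h j c :
  exchange_inv Sw h -> j \notin Sw -> M j = Some c -> c != a ->
  (forall d, load (mix M M0 Sw) d <= C + (d == c)) ->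
  load (mix M0 M (j |: Sw)) c <= C ->
  exchange_inv (j |: Sw) (M0 j).
Proof.
move=> [inv_a inv_Q _] jSw Mj ca inv_P Qc; split.
- move=> i; rewrite in_setU1 => /orP [/eqP -> | /inv_a //].
  by rewrite Mj; apply: contra ca => /eqP [->].
- move=> d; case: (eqVneq d c) => [-> // | dc].
  have := load_update d (mix_add M0 M Sw (j:=j)).
  rewrite !ffunE setU11 (negbTE jSw) Mj; change (Some c == Some d) with (c == d).
  by rewrite [c == d]eq_sym (negbTE dc); have := inv_Q d; lia.
- move=> d; have := load_update d (mix_add M M0 Sw (j:=j)).
  rewrite !ffunE setU11 (negbTE jSw) Mj [M0 j == _]eq_sym.
  change (Some c == Some d) with (c == d).
  by have := inv_P d; rewrite [d == c]eq_sym; lia.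
Qed.

(* An overfull alternative c (for "M outside Sw, M0 on Sw") is not a and
   receives an M-agent outside Sw, since M0 alone fits on c. *)
Lemma overfull_agent Sw c : C < load (mix M M0 Sw) c ->
  c != a /\ exists2 j, j \notin Sw & M j = Some c.
Proof.
move=> over; split.
  apply: contraTneq over => ->; rewrite -leqNgt.
  exact: leq_trans (load_mix_avoid M Sw M0a).1 (loadM a).
case: (pickP [pred j | (j \notin Sw) && (M j == Some c)]) => [j /andP [? /eqP ?] | none].
  by exists j.
have : load (mix M M0 Sw) c <= load M0 c.
  apply: load_mono => i; rewrite ffunE; case: ifP => // iSw Mi.
  by have := none i; rewrite /= iSw Mi eqxx.
by have := loadM0 c; lia.
Qed.

Lemma exchange_progress Sw h : exchange_inv Sw h ->
  (exchange_inv Sw None /\ forall i, M i = Some b -> i \in Sw) \/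
  exists j h', j \notin Sw /\ exchange_inv (j |: Sw) h'.
Proof.
move=> inv; have [inv_a inv_Q inv_P] := inv.
case: (boolP [exists c, C < load (mix M M0 Sw) c]) => [/existsP [c over] | /existsPn fit].
  have hc : h = Some c.
    case: (eqVneq (Some c) h) => [// | ne]; have := inv_P c; rewrite (negbTE ne); lia.
  have Pc : load (mix M M0 Sw) c = C.+1 by have := inv_P c; rewrite hc eqxx; lia.
  have [ca [j jSw Mj]] := overfull_agent over.
  (* moving j off c makes room there; the capacity of c on the other side
     follows from the conservation of total load *)
  right; exists j, (M0 j); split => //; apply: (exchange_extend inv jSw Mj ca).
    by move=> d; have := inv_P d; rewrite hc.
  have := load_mix_sum M M0 (j |: Sw) c; have := load_update c (mix_add M M0 Sw (j:=j)).
  by rewrite !ffunE setU11 (negbTE jSw) Mj eqxx Pc; have := loadM c; have := loadM0 c; lia.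
have inv_P' c : load (mix M M0 Sw) c <= C by rewrite leqNgt fit.
case: (pickP [pred j | (j \notin Sw) && (M j == Some b)]) => [j /andP [jSw /eqP Mj] | none].
  right; exists j, (M0 j); split => //; apply: (exchange_extend inv jSw Mj).
  - by rewrite eq_sym.
  - by move=> d; apply: leq_trans (inv_P' d) (leq_addr _ _).
  - exact: leq_trans (load_mix_avoid M (j |: Sw) M0b).2 (loadM b).
left; split.
  by split => // c; apply: leq_trans (inv_P' c) (leq_addr _ _).
by move=> i Mi; have := none i; rewrite /= Mi eqxx andbT => /negbFE.
Qed.

Lemma exchange_exists :
  exists Sw, exchange_inv Sw None /\ forall i, M i = Some b -> i \in Sw.
Proof.
suff grow k Sw h : #|~: Sw| <= k -> exchange_inv Sw h ->
    exists Sw, exchange_inv Sw None /\ forall i, M i = Some b -> i \in Sw.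
  exact: (grow #|I| set0 None (max_card _) exchange_inv0).
elim: k Sw h => [|k IHk] Sw h size inv;
  have [fin | [j [h' [jSw inv']]]] := exchange_progress inv; try by exists Sw.
- by have := card_grow jSw; lia.
- by apply: IHk inv'; have := card_grow jSw; lia.
Qed.

End Exchange.

Section BestValue.
Variables (n m K : nat) (alpha : nat -> nat) (P : profile n m).
Implicit Types (S T X : {set 'I_m}) (Phi : {ffun 'I_n -> option 'I_m}).

Lemma partialP S Phi :
  partial_for K S Phi <->
  (forall i c, Phi i = Some c -> c \in S) /\ (forall c, load Phi c <= cap n K).
Proof.
split.
  by case/andP => /forallP PS /forallP PC; split => // i c E; move: (PS i); rewrite E.
case=> PS PC; apply/andP; split; apply/forallP; last exact: PC.
by move=> i; case E: (Phi i) => [c|] //; apply: PS E.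
Qed.

Lemma best_ub S Phi : partial_for K S Phi -> ell alpha P Phi <= best K alpha P S.
Proof. by move=> SPhi; apply: (leq_bigmax_cond Phi SPhi). Qed.

(* The maximum defining best is attained (leaving everybody unassigned is
   always feasible). *)
Lemma best_attained S : exists2 Phi, partial_for K S Phi & ell alpha P Phi = best K alpha P S.
Proof.
have empty : partial_for K S [ffun _ : 'I_n => None].
  apply/partialP; split; first by move=> i c; rewrite ffunE.
  by move=> c; rewrite /load (eq_card (B := pred0)) ?card0 // => i; rewrite !inE ffunE.
have feasible : 0 < #|[pred Phi : {ffun 'I_n -> option 'I_m} | partial_for K S Phi]|.
  by apply/card_gt0P; exists [ffun=> None].
have [Phi SPhi attained] := eq_bigmax_cond (ell alpha P) feasible.
by exists Phi => //; rewrite -attained.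
Qed.

Lemma best_mono S T : S \subset T -> best K alpha P S <= best K alpha P T.
Proof.
move=> ST; have [Phi /partialP [PS PC] <-] := best_attained S.
by apply: best_ub; apply/partialP; split => // i c /PS; apply: (subsetP ST).
Qed.

(* Local submodularity of best: an optimal assignment M for X + a + b and an
   optimal one M0 for X are recombined, by the exchange process, into
   feasible assignments for X + a and X + b of the same total value. *)
Lemma best_local_submod X (a b : 'I_m) :
  a \notin X -> b \notin X -> a != b ->
  best K alpha P (a |: (b |: X)) + best K alpha P X <=
  best K alpha P (a |: X) + best K alpha P (b |: X).
Proof.
move=> aX bX ab.
have [M /partialP [MS MC] <-] := best_attained (a |: (b |: X)).
have [M0 /partialP [M0S M0C] <-] := best_attained X.
have M0avoid c : c \notin X -> forall i, M0 i != Some c.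
  by move=> cX i; apply: contra cX => /eqP /M0S.
have [Sw [[Sw_a QC PC] Sw_b]] := exchange_exists ab (M0avoid _ aX) (M0avoid _ bX) MC M0C.
rewrite -(sum_mix (fun i x => alpha (opos P i x)) M M0 Sw).
apply: leq_add; apply: best_ub; apply/partialP; split.
- move=> i c; rewrite ffunE; case: ifP => iSw.
    by move/M0S; rewrite in_setU1 => ->; rewrite orbT.
  move=> Mi; move: (MS _ _ Mi); rewrite !in_setU1.
  case/or3P => [-> // | /eqP cb | ->]; last by rewrite orbT.
  by move: (Sw_b i); rewrite iSw -cb => /(_ Mi).
- by move=> c; have := PC c; rewrite /= addn0.
- move=> i c; rewrite ffunE; case: ifP => iSw; last first.
    by move/M0S; rewrite in_setU1 => ->; rewrite orbT.
  move=> Mi; move: (MS _ _ Mi); rewrite !in_setU1.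
  case/or3P => [/eqP ca | -> // | ->]; last by rewrite orbT.
  by move: (Sw_a i iSw); rewrite Mi ca eqxx.
- exact: QC.
Qed.

End BestValue.

Section Submodularity.
Variables (T : finType) (f : {set T} -> nat).
Hypothesis f_mono : forall A B : {set T}, A \subset B -> f A <= f B.
Hypothesis f_local : forall (X : {set T}) a b, a \notin X -> b \notin X -> a != b ->
  f (a |: (b |: X)) + f X <= f (a |: X) + f (b |: X).

(* Diminishing returns: the marginal gain of a decreases along inclusion.  It
   follows from the local inequality by adding the elements of B \ A one at a
   time. *)
Lemma diminishing_returns (A B : {set T}) a :
  A \subset B -> f (a |: B) + f A <= f (a |: A) + f B.
Proof.
move=> AB; have [k] := ubnP #|B :\: A|; elim: k B AB => // k IHk B AB size.
have [aB | aB] := boolP (a \in B).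
  by rewrite (setUidPr (_ : [set a] \subset B)) ?sub1set // addnC leq_add2r f_mono ?subsetUr.
have [BA | [b]] := set_0Vmem (B :\: A).
  have -> : B = A by apply/eqP; rewrite eqEsubset AB -setD_eq0 BA eqxx.
  by rewrite addnC.
rewrite inE => /andP [bA bB].
have AB' : A \subset B :\ b.
  by apply/subsetP => x xA; rewrite !inE (subsetP AB _ xA) andbT; apply: contraNneq bA => <-.
have shrink : #|(B :\ b) :\: A| < #|B :\: A|.
  apply: proper_card; apply/properP; split.
    by apply/subsetP => x; rewrite !inE => /andP [-> /andP [_ ->]].
  by exists b; rewrite !inE ?eqxx ?bA ?bB.
have step := IHk _ AB' (leq_trans shrink size).
have ab : a != b by apply: contraNneq aB => ->.
have aB' : a \notin B :\ b by rewrite !inE negb_and aB orbT.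
have bB' : b \notin B :\ b by rewrite !inE eqxx.
have := f_local aB' bB' ab; rewrite setD1K //.
by move: step; lia.
Qed.

Lemma sum_marginal_gains (A U : {set T}) :
  f (A :|: U) + #|U| * f A <= f A + \sum_(u in U) f (u |: A).
Proof.
have [k] := ubnP #|U|; elim: k U => // k IHk U size.
have [-> | [u uU]] := set_0Vmem U; first by rewrite setU0 cards0 big_set0.
have IH := IHk (U :\ u) (leq_trans (proper_card (properD1 uU)) size).
have gain := diminishing_returns u (subsetUl A (U :\ u)).
rewrite setUCA setD1K // in gain.
rewrite (cardsD1 u U) uU (big_setD1 u uU) /= add1n mulSn.
by move: IH gain; lia.
Qed.

End Submodularity.

Lemma cap_ge (n K : nat) : 0 < K -> n <= K * cap n K.
Proof.
move=> K_gt0; rewrite /cap.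
by have := divn_eq (n + K.-1) K; have := ltn_pmod (n + K.-1) K_gt0; lia.
Qed.

Section Completion.
Variables (n m K : nat) (alpha : nat -> nat) (P : profile n m) (S : {set 'I_m}).
Hypotheses (alpha_mono : nonincreasing_on m alpha) (K_gt0 : 0 < K) (S_card : #|S| = K).
Implicit Types (Psi : {ffun 'I_n -> option 'I_m}).

Definition unassigned Psi : {set 'I_n} := [set i | Psi i == None].

Lemma spare_capacity Psi i0 :
  partial_for K S Psi -> Psi i0 = None -> exists2 c, c \in S & load Psi c < cap n K.
Proof.
move=> /partialP [PS _] Pi0.
case: (pickP [pred c | (c \in S) && (load Psi c < cap n K)]) => [c /andP [] | full].
  by exists c.
have : K * cap n K <= #|[set i | Psi i != None]|.
  rewrite -(sum_load PS) -{1}S_card -sum_nat_const; apply: leq_sum => c cS.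
  by move: (full c); rewrite /= cS /= => /negbT; rewrite -leqNgt.
have : #|[set i | Psi i != None]| < n.
  rewrite -[X in _ < X]card_ord; apply: proper_card; apply/properP.
  split; first exact/subsetP.
  by exists i0; rewrite // inE Pi0.
by have := cap_ge n K_gt0; lia.
Qed.

(* Hence an unassigned agent can be sent to S; this cannot lower the
   satisfaction, since bot counts as the last position m. *)
Lemma assign_one Psi i0 :
  partial_for K S Psi -> Psi i0 = None ->
  exists Psi', [/\ partial_for K S Psi', ell alpha P Psi <= ell alpha P Psi'
                 & #|unassigned Psi'| < #|unassigned Psi|].
Proof.
move=> SPsi Pi0; have [c cS spare] := spare_capacity SPsi Pi0.
move/partialP: SPsi => [PS PC].
set Psi' := [ffun i => if i == i0 then Some c else Psi i].
have same i : i != i0 -> Psi' i = Psi i by move=> /negbTE ne; rewrite ffunE ne.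
exists Psi'; split.
- apply/partialP; split.
    by move=> i d; rewrite ffunE; case: eqP => _; [case=> <- | exact: PS].
  move=> d; have := load_update d same; rewrite ffunE eqxx Pi0.
  case: (eqVneq d c) => [-> | dc]; first by rewrite eqxx; lia.
  change (Some c == Some d) with (c == d); rewrite [c == d]eq_sym (negbTE dc).
  by have := PC d; lia.
- have : ell alpha P Psi' + alpha (opos P i0 (Psi i0)) =
          ell alpha P Psi + alpha (opos P i0 (Psi' i0)) :=
    sum_update (fun i x => alpha (opos P i x)) same.
  rewrite ffunE eqxx Pi0 /=.
  have : alpha m <= alpha (pos P i0 c) by apply: alpha_mono; rewrite /pos ?ltn_ord.
  lia.
- apply: proper_card; apply/properP; split.
    by apply/subsetP => i; rewrite !inE ffunE; case: (i == i0).
  by exists i0; rewrite !inE ?Pi0 ?ffunE ?eqxx.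
Qed.

Lemma assign_all Psi : partial_for K S Psi ->
  exists2 Psi', partial_for K S Psi' /\ ell alpha P Psi <= ell alpha P Psi' &
                forall i, Psi' i != None.
Proof.
have [k] := ubnP #|unassigned Psi|; elim: k Psi => // k IHk Psi size SPsi.
case: (pickP [pred i | Psi i == None]) => [i0 /eqP Pi0 | full]; last first.
  by exists Psi => // i; apply/negbT; exact: full.
have [Psi' [SPsi' more fewer]] := assign_one SPsi Pi0.
have [Psi'' [SPsi'' more'] full] := IHk Psi' (leq_trans fewer size) SPsi'.
by exists Psi'' => //; split; last exact: leq_trans more more'.
Qed.

Lemma monroe_of_full Psi : partial_for K S Psi -> (forall i, Psi i != None) ->
  exists Phi : {ffun 'I_n -> 'I_m}, monroe K Phi /\ ell_tot alpha P Phi = ell alpha P Psi.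
Proof.
move=> /partialP [PS PC] full.
have [c0 _] : exists c0 : 'I_m, c0 \in S by apply/card_gt0P; rewrite S_card.
set Phi := [ffun i => odflt c0 (Psi i)].
have PsiE i : Psi i = Some (Phi i) by rewrite ffunE; move: (full i); case: (Psi i).
exists Phi; split; last by apply: eq_bigr => i _; rewrite PsiE.
apply/andP; split.
  rewrite -S_card; apply: subset_leq_card; apply/subsetP => _ /imsetP [i _ ->].
  exact: (PS i _ (PsiE i)).
apply/forallP => a; rewrite (eq_card (B := [set i | Psi i == Some a])) ?PC //.
by move=> i; rewrite !inE PsiE.
Qed.

End Completion.

(* An optimal Monroe assignment is a partial assignment for its own image, a
   set of at most K alternatives; so OPT is bounded by best on such a set. *)
Lemma OPT_le_best (n m K : nat) (alpha : nat -> nat) (P : profile n m) :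
  exists2 T : {set 'I_m}, #|T| <= K & OPT K alpha P <= best K alpha P T.
Proof.
set monroeK := [pred Psi : {ffun 'I_n -> 'I_m} | monroe K Psi].
case: (pickP monroeK) => [Psi0 monroe0 | none]; last first.
  by exists set0; rewrite ?cards0 // /OPT big_pred0.
have feasible : 0 < #|monroeK| by apply/card_gt0P; exists Psi0.
have [Psi /andP [image_le /forallP capP] optimal] := eq_bigmax_cond (ell_tot alpha P) feasible.
exists [set Psi i | i in 'I_n] => //; rewrite /OPT optimal.
have -> : ell_tot alpha P Psi = ell alpha P [ffun i => Some (Psi i)].
  by apply: eq_bigr => i _; rewrite ffunE.
apply: best_ub; apply/partialP; split.
  by move=> i c; rewrite ffunE => -[<-]; apply: imset_f.
move=> c; rewrite /load (eq_card (B := [set i | Psi i == c])) ?capP //.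
by move=> i; rewrite !inE ffunE.
Qed.

Lemma scale_gain_count (o t K x y : nat) :
  o + t * x <= x + t * y -> t <= K -> x <= y -> o + K * x <= x + K * y.
Proof.
move=> gain tK xy; rewrite -(subnKC tK) !mulnDl !addnA.
exact: leq_add gain (leq_mul (leqnn _) xy).
Qed.

Section GreedyAnalysis.
Variables (n m K : nat) (alpha : nat -> nat) (P : profile n m) (s : 'I_K -> 'I_m).
Hypothesis run : GM_run alpha P s.

Lemma prefix_succ (k : 'I_K) : prefix_set s k.+1 = s k |: prefix_set s k.
Proof.
apply/setP => x; rewrite in_setU1; apply/imsetP/orP.
  case=> j; rewrite inE /= ltnS leq_eqVlt => /orP [/eqP jk | jk] ->.
    by left; rewrite (_ : j = k) //; apply: val_inj.
  by right; apply/imsetP; exists j.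
case=> [/eqP -> | /imsetP [j jk ->]]; first by exists k; rewrite // inE /=.
by exists j => //; move: jk; rewrite !inE /=; apply: ltnW.
Qed.

(* GM never picks an alternative twice, so it ends with exactly K of them. *)
Lemma card_prefix_set : #|prefix_set s K| = K.
Proof.
have s_inj : injective s.
  move=> i j sij; apply: val_inj; case: (ltngtP i j) => // ij.
    by have [] := run j; rewrite -sij; case/negP; apply/imsetP; exists i.
  by have [] := run i; rewrite sij; case/negP; apply/imsetP; exists j.
rewrite /prefix_set card_imset // -[RHS]card_ord; apply: eq_card => j.
by rewrite !inE /= ltn_ord.
Qed.

Lemma greedy_choice_dominates (k : 'I_K) (t : 'I_m) :
  best K alpha P (t |: prefix_set s k) <= best K alpha P (prefix_set s k.+1).
Proof.
rewrite prefix_succ; have [tA | tA] := boolP (t \in prefix_set s k).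
  by rewrite (setUidPr (_ : [set t] \subset _)) ?sub1set // best_mono ?subsetUr.
exact: (run k).2.
Qed.

(* Each greedy iteration closes a 1/K fraction of the gap to OPT. *)
Lemma greedy_step (k : nat) : k < K ->
  OPT K alpha P + K * best K alpha P (prefix_set s k) <=
  best K alpha P (prefix_set s k) + K * best K alpha P (prefix_set s k.+1).
Proof.
move=> kK; set A := prefix_set s k; set A' := prefix_set s k.+1.
have [T TK OPT_T] := OPT_le_best K alpha P.
have grow : best K alpha P A <= best K alpha P A'.
  by rewrite /A' (prefix_succ (Ordinal kK)) best_mono ?subsetUr.
apply: scale_gain_count TK grow.
have gains := sum_marginal_gains (@best_mono n m K alpha P)
                                  (@best_local_submod n m K alpha P) A T.
have dominated : \sum_(t in T) best K alpha P (t |: A) <= #|T| * best K alpha P A'.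
  rewrite -sum_nat_const; apply: leq_sum => t _.
  exact: (greedy_choice_dominates (Ordinal kK)).
have OPT_AT : OPT K alpha P <= best K alpha P (A :|: T) :=
  leq_trans OPT_T (best_mono K alpha P (subsetUr _ _)).
by move: gains dominated OPT_AT; lia.
Qed.

End GreedyAnalysis.

Section Approximation.
Local Open Scope R_scope.

Lemma exp_pow_INR (a : R) (k : nat) : exp a ^ k = exp (INR k * a).
Proof.
elim: k => [|k IHk] /=; first by rewrite Rmult_0_l exp_0.
by rewrite IHk -exp_plus; congr exp; case: k {IHk} => [|k] /=; ring.
Qed.

Lemma inv_INR_bounds (K : nat) : (1 <= K)%N -> 0 < / INR K <= 1.
Proof.
move=> K_ge1; have K1 : 1 <= INR K by apply: (le_INR 1); apply/leP.
split; first by apply: Rinv_0_lt_compat; lra.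
by rewrite -Rinv_1; apply: Rinv_le_contravar; lra.
Qed.

(* The classical estimate (1 - 1/K)^K <= 1/e, from 1 - y <= exp (-y). *)
Lemma pow_one_minus_inv_le (K : nat) : (1 <= K)%N -> (1 - / INR K) ^ K <= / exp 1.
Proof.
move=> K_ge1; have K1 : 1 <= INR K by apply: (le_INR 1); apply/leP.
have inv_bounds := inv_INR_bounds K_ge1.
apply: Rle_trans (pow_incr _ (exp (- / INR K)) K _) _.
  by split; [lra | have := exp_ineq1_le (- / INR K); lra].
rewrite exp_pow_INR -exp_Ropp; right; congr exp; field; lra.
Qed.

Lemma geometric_decay (q : R) (d : nat -> R) (K : nat) :
  0 <= q -> (forall k, (k < K)%N -> d k.+1 <= q * d k) -> d K <= q ^ K * d 0%N.
Proof.
move=> q_ge0; elim: K => [|K IHK] step /=; first lra.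
have := IHK (fun k kK => step k (ltnW kK)); have := step K (ltnSn K).
by move=> le1 le2; apply: Rle_trans le1 _; rewrite Rmult_assoc; apply: Rmult_le_compat_l.
Qed.

Lemma greedy_approximation (K O : nat) (g : nat -> nat) : (1 <= K)%N ->
  (forall k, (k < K)%N -> (O + K * g k <= g k + K * g k.+1)%N) ->
  one_minus_inv_e * INR O <= INR (g K).
Proof.
move=> K_ge1 rec; have K1 : 1 <= INR K by apply: (le_INR 1); apply/leP.
set q := 1 - / INR K.
have q_ge0 : 0 <= q by have := inv_INR_bounds K_ge1; rewrite /q; lra.
have gap_step k : (k < K)%N -> INR O - INR (g k.+1) <= q * (INR O - INR (g k)).
  move=> kK; have /leP/le_INR := rec k kK; rewrite !plus_INR !mult_INR => gain.
  have -> : INR O - INR (g k.+1) = (INR K * (INR O - INR (g k.+1))) * / INR K by field; lra.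
  have -> : q * (INR O - INR (g k)) =
            (INR K * (INR O - INR (g k)) - (INR O - INR (g k))) * / INR K.
    by rewrite /q; field; lra.
  by apply: Rmult_le_compat_r; [left; apply: Rinv_0_lt_compat; lra | lra].
have decay := geometric_decay q_ge0 gap_step.
have qK := pow_one_minus_inv_le K_ge1; rewrite -/q in qK.
have qK_ge0 : 0 <= q ^ K by apply: pow_le.
have O_ge0 := pos_INR O; have g0_ge0 := pos_INR (g 0%N).
have : q ^ K * (INR O - INR (g 0%N)) <= / exp 1 * INR O.
  apply: Rle_trans (Rmult_le_compat_r _ _ _ O_ge0 qK); apply: Rmult_le_compat_l; lra.
by rewrite /one_minus_inv_e; lra.
Qed.

End Approximation.

Theorem mainTheorem12 :
  forall (n m K : nat) (alpha : nat -> nat) (P : profile n m),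
    nonincreasing_on m alpha ->
    1 <= K -> K <= m ->
    forall s : 'I_K -> 'I_m,
      GM_run alpha P s ->
      forall Phi : {ffun 'I_n -> option 'I_m},
        (* Phi is a choice of Phi^S_alpha for the final S *)
        partial_for K (prefix_set s K) Phi ->
        (forall Psi : {ffun 'I_n -> option 'I_m},
            partial_for K (prefix_set s K) Psi -> ell alpha P Psi <= ell alpha P Phi) ->
        (exists Phi' : {ffun 'I_n -> 'I_m},
            monroe K Phi' /\ ell_tot alpha P Phi' = ell alpha P Phi) /\
        Rle (Rmult one_minus_inv_e (INR (OPT K alpha P))) (INR (ell alpha P Phi)).
Proof.
move=> n m K alpha P alpha_mono K_ge1 _ s run Phi SPhi Phi_opt; split.
- have [Psi [SPsi more] full] := assign_all P alpha_mono K_ge1 (card_prefix_set run) SPhi.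
  have [Phi' [monroe' same]] :=
    monroe_of_full alpha P K_ge1 (card_prefix_set run) SPsi full.
  by exists Phi'; split => //; apply/eqP; rewrite same eqn_leq more Phi_opt.
- have Phi_best : ell alpha P Phi = best K alpha P (prefix_set s K).
    apply/eqP; rewrite eqn_leq best_ub //=.
    by have [Psi SPsi <-] := best_attained K alpha P (prefix_set s K); apply: Phi_opt.
  rewrite Phi_best.
  apply: (greedy_approximation (g := fun k => best K alpha P (prefix_set s k)) K_ge1).
  exact: greedy_step run.
Qed.
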